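(* Let $T$ be a tree of order at least $3$, let $T^*$ be the twin-free tree associated to $T$, and let $k\geq 1$ be an integer. Then $\gamma_{B_k}(T)=\gamma_{B_k}(T^* )$.
   Context: $d(u,v)$ denotes the distance in the graph. For a connected graph $G$ and an integer $k\ge 1$, a function $f\colon V(G)\to\{0,1,\dots,k\}$ is a dominating $k$-broadcast on $G$ if for every $u\in V(G)$ there is a vertex $v$ with $f(v)\geq 1$ and $d(u,v)\leq f(v)$. Its cost is $\omega(f)=\sum_{u\in V(G)}f(u)$, and $\gamma_{B_k}(G)$ is the minimum cost of a dominating $k$-broadcast on $G$. A leaf is a vertex of degree one, its unique neighbor is a support vertex, and leaves with the same support vertex are twin leaves. For a tree $T$ of order at least 3, the twin-free tree associated to $T$, denoted $T^*$, is the tree obtained from $T$ by deleting all but one of the leaves of every maximal set of pairwise twin leaves. *)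

From mathcomp Require Import all_boot.
From mathcomp Require Import boolp.
Set Implicit Arguments. Unset Strict Implicit. Unset Printing Implicit Defensive.

Definition simple_graph (T : finType) (e : rel T) : Prop :=
  symmetric e /\ irreflexive e.

Definition connected_graph (T : finType) (e : rel T) : Prop :=
  forall u v : T, connect e u v.

Definition acyclic_graph (T : finType) (e : rel T) : Prop :=
  forall s : seq T, uniq s -> 3 <= size s -> ~~ cycle e s.

Definition is_tree (T : finType) (e : rel T) : Prop :=
  [/\ simple_graph e, connected_graph e & acyclic_graph e].

Definition dist_le (T : finType) (e : rel T) (v u : T) (n : nat) : Prop :=
  exists p : seq T, [/\ path e v p, last v p = u & size p <= n].

Arguments dist_le : clear implicits.
Definition dom_broadcast (T : finType) (e : rel T) (k : nat)
    (f : {ffun T -> 'I_k.+1}) : Prop :=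
  forall u : T, exists v : T, 1 <= f v /\ dist_le T e v u (f v).

Arguments dom_broadcast {T} e k f.

Definition bcost (T : finType) (k : nat) (f : {ffun T -> 'I_k.+1}) : nat :=
  \sum_(x : T) (f x : nat).

(* gamma_{B_k}(G): the minimum cost of a dominating k-broadcast.  The default
   #|T| of the iterated minimum is harmless for k >= 1 since the constant
   broadcast 1 is dominating with cost #|T|. *)
Definition gammaB (T : finType) (e : rel T) (k : nat) : nat :=
  \big[minn/#|T|]_(f : {ffun T -> 'I_k.+1} | `[< dom_broadcast e k f >]) bcost f.

Definition deg (T : finType) (e : rel T) (v : T) : nat := #|[set u | e v u]|.
Definition is_leaf (T : finType) (e : rel T) (v : T) : bool := deg e v == 1.

(* S is the vertex set of a twin-free tree associated to T: it contains every
   non-leaf vertex and, for every support vertex s, exactly one leaf adjacent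
   to s (every leaf is adjacent to its support vertex). *)
Definition twin_free_set (T : finType) (e : rel T) (S : {set T}) : Prop :=
  (forall v, ~~ is_leaf e v -> v \in S) /\
  (forall s, (exists l, is_leaf e l && e s l) ->
     #|[set l in S | is_leaf e l && e s l]| = 1).

Definition induced (T : finType) (e : rel T) (S : {set T}) : rel {x : T | x \in S} :=
  fun x y => e (val x) (val y).
Arguments induced {T} e S x y.

(* Moving the power of every leaf onto its support vertex, capped at k, never
   increases the cost and keeps the broadcast dominating: a leaf reaches every
   other vertex through its support vertex, which is not a leaf because T is
   connected with at least three vertices.  Hence both sides are attained by
   broadcasts vanishing on leaves.  Such a broadcast on T restricts to T*, the
   subgraph induced by S, since a duplicate-free walk between vertices of T*
   never passes through a leaf; conversely one on T* extends by zero to T, a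
   deleted leaf being reached by redirecting the last step of a walk to its
   surviving twin. *)
From mathcomp Require Import all_boot all_order boolp.
Set Implicit Arguments. Unset Strict Implicit. Unset Printing Implicit Defensive.
Import Order.TTheory.

Section Broadcast.
Variables (T : finType) (e : rel T).

Definition dominated_by (F : T -> nat) (u : T) : Prop :=
  exists v, 0 < F v /\ dist_le T e v u (F v).

Lemma dist_le_widen v u m n : m <= n -> dist_le T e v u m -> dist_le T e v u n.
Proof. by move=> le_mn [p [ep pu sz_p]]; exists p; split => //; apply: leq_trans le_mn. Qed.

Lemma gammaB_le_sum k (F : T -> nat) :
  (forall x, F x <= k) -> (forall u, dominated_by F u) -> gammaB e k <= \sum_x F x.
Proof.
move=> F_le_k F_dom; pose f : {ffun T -> 'I_k.+1} := [ffun x => inord (F x)].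
have fE x : f x = F x :> nat by rewrite ffunE inordK // ltnS.
have -> : \sum_x F x = bcost f by apply: eq_bigr => x _; rewrite fE.
rewrite /gammaB -minEnat -leEnat; apply: bigmin_le_cond; apply/asboolP => u.
by have [v] := F_dom u; exists v; rewrite fE.
Qed.

Lemma gammaB_attained k : 0 < k ->
  exists2 f : {ffun T -> 'I_k.+1}, dom_broadcast e k f & gammaB e k = bcost f.
Proof.
move=> k_gt0; pose one : {ffun T -> 'I_k.+1} := [ffun=> Ordinal (k_gt0 : 1 < k.+1)].
have one_dom : `[< dom_broadcast e k one >].
  by apply/asboolP => u; exists u; rewrite ffunE; split => //; exists [::].
have one_cost : bcost one = #|T|.
  by rewrite /bcost (eq_bigr (fun _ => 1)) ?sum1_card // => x _; rewrite ffunE.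
case: (@arg_minP _ _ _ one (fun f => `[< dom_broadcast e k f >]) (@bcost T k) one_dom)
  => f f_dom f_min.
exists f; first exact/asboolP.
rewrite /gammaB -minEnat; apply/le_anti; rewrite bigmin_le_cond //=; apply/bigmin_geP; split.
  by rewrite -one_cost f_min.
exact: f_min.
Qed.

End Broadcast.

Section Leaves.
Variables (T : finType) (e : rel T).
Hypotheses (e_sym : symmetric e) (e_conn : connected_graph e) (card_T : 2 < #|T|).

Lemma leaf_neighbour l : is_leaf e l -> exists s, forall x, e l x = (x == s).
Proof.
by rewrite /is_leaf /deg => /cards1P[s Es]; exists s => x; rewrite -in_set1 -Es inE.
Qed.

Lemma leaf_adj_nonleaf l s : is_leaf e l -> e l s -> ~~ is_leaf e s.
Proof.
move=> /leaf_neighbour[s' El] els; apply/negP => /leaf_neighbour[l' Es].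
have /eqP ss' : s == s' by rewrite -El.
have /eqP ll' : l == l' by rewrite -Es e_sym.
subst s' l'.
have closed_ls : closed e (mem [:: l; s]).
  apply: (intro_closed (sym_connect_sym e_sym)) => x y exy.
  by rewrite !inE => /orP[]/eqP xE; move: exy; rewrite xE ?El ?Es => ->; rewrite ?orbT.
have T_ls : #|T| <= size [:: l; s].
  apply: leq_trans (card_size _); apply: subset_leq_card; apply/subsetP => x _.
  by rewrite -(closed_connect closed_ls (e_conn l x)) inE eqxx.
by move: (leq_trans card_T T_ls).
Qed.

Definition gather k (F : T -> nat) (x : T) : nat :=
  if is_leaf e x then 0 else minn k (F x + \sum_(l | is_leaf e l && e x l) F l).

Lemma gather_le k F x : gather k F x <= k.
Proof. by rewrite /gather; case: ifP => // _; rewrite geq_minl. Qed.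

Lemma gather_ge_self k F x : ~~ is_leaf e x -> F x <= k -> F x <= gather k F x.
Proof. by move=> x_nl Fx_le; rewrite /gather (negbTE x_nl) leq_min Fx_le leq_addr. Qed.

Lemma gather_ge_leaf k F s l : ~~ is_leaf e s -> is_leaf e l -> e s l -> F l <= k ->
  F l <= gather k F s.
Proof.
move=> s_nl l_leaf esl Fl_le; rewrite /gather (negbTE s_nl) leq_min Fl_le.
by rewrite (bigD1 l) /= ?l_leaf ?esl // addnCA leq_addr.
Qed.

(* Each leaf term is counted once, at the unique neighbour of the leaf. *)
Lemma sum_gather_le k F : \sum_x gather k F x <= \sum_x F x.
Proof.
apply: (@leq_trans (\sum_x ((if is_leaf e x then 0 else F x) +
                            \sum_(l | is_leaf e l && e x l) F l))).
  by apply: leq_sum => x _; rewrite /gather; case: ifP => // _; apply: geq_minr.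
rewrite big_split /= (exchange_big_dep (is_leaf e)) /=; last by move=> ? ? _ /andP[].
rewrite [X in _ <= X](bigID (is_leaf e)) /= addnC leq_add //.
  apply: leq_sum => l l_leaf; rewrite (eq_bigl [in [set x | e l x]]); last first.
    by move=> x; rewrite inE l_leaf e_sym.
  by rewrite sum_nat_const -[#|_|]/(deg e l) (eqP l_leaf) mul1n.
by rewrite [X in _ <= X]big_mkcond; apply: leq_sum => x _; case: ifP.
Qed.

Lemma dist_le_from_leaf w s u r : is_leaf e w -> e w s -> 0 < r ->
  dist_le T e w u r -> dist_le T e s u r.
Proof.
move=> /leaf_neighbour[s' Ew] ews r_gt0 [[|x p] [/= wp pu sz_p]].
  by exists [:: w]; split => //=; rewrite e_sym ews.
case/andP: wp => ewx xp; have xs : x = s by move: ewx ews; rewrite !Ew => /eqP-> /eqP->.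
by exists p; rewrite -xs; split => //; apply: ltnW.
Qed.

Lemma dominated_by_gather k F u : (forall x, F x <= k) -> dominated_by e F u ->
  exists v, [/\ ~~ is_leaf e v, 0 < gather k F v & dist_le T e v u (gather k F v)].
Proof.
move=> F_le_k [w [Fw_gt0 wu]].
have [v [v_nl Fw_le vu]] : exists v,
    [/\ ~~ is_leaf e v, F w <= gather k F v & dist_le T e v u (F w)].
  have [w_leaf|w_nl] := boolP (is_leaf e w); last first.
    by exists w; split => //; apply: gather_ge_self.
  have [s Ew] := leaf_neighbour w_leaf; have ews : e w s by rewrite Ew.
  have s_nl := leaf_adj_nonleaf w_leaf ews.
  exists s; split => //; first by apply: gather_ge_leaf; rewrite // e_sym.
  exact: dist_le_from_leaf ews Fw_gt0 wu.
by exists v; split => //; [apply: leq_trans Fw_le | apply: dist_le_widen vu].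
Qed.

Lemma dist_le_twin l s u v r : is_leaf e l -> e l s -> e s u -> v != l ->
  dist_le T e v l r -> dist_le T e v u r.
Proof.
move=> /leaf_neighbour[s' El] els esu v_neq_l [p []].
case/lastP: p => [|p x] /=; first by move=> _ vl; rewrite vl eqxx in v_neq_l.
rewrite rcons_path last_rcons size_rcons => /andP[vp ex] xl sz_p.
have ps : last v p = s by move: ex els; rewrite xl e_sym !El => /eqP-> /eqP->.
by exists (rcons p u); rewrite rcons_path last_rcons size_rcons ps esu vp.
Qed.

End Leaves.

Section TwinFree.
Variables (T : finType) (e : rel T) (S : {set T}).
Hypotheses (e_sym : symmetric e) (e_conn : connected_graph e) (card_T : 2 < #|T|).
Hypothesis nonleaf_in_S : forall v, ~~ is_leaf e v -> v \in S.
Hypothesis one_twin_in_S : forall s, (exists l, is_leaf e l && e s l) ->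
  #|[set l in S | is_leaf e l && e s l]| = 1.
Local Notation sT := {x : T | x \in S}.

Lemma uniq_path_in_set v p :
  path e v p -> uniq (v :: p) -> last v p \in S -> all [in S] p.
Proof.
move=> vp uniq_vp p_last; apply/allP => x xp; apply: contraT => xS.
have [s Ex] := leaf_neighbour (contraNT (@nonleaf_in_S x) xS).
case/splitPr: xp vp uniq_vp p_last => p1 p2.
rewrite cat_path last_cat -cat_cons cat_uniq => /and3P[_ ex1 xp2] /and3P[_ disj _].
case: p2 xp2 disj => [|b p2] xp2 disj; first by move=> xS'; rewrite xS' in xS.
have /eqP b_s : b == s by rewrite -Ex; case/andP: xp2.
have /eqP p1_s : last v p1 == s by rewrite -Ex e_sym.
have b_in : b \in x :: b :: p2 by rewrite inE mem_head orbT.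
by move/hasPn/(_ b b_in): disj; rewrite b_s -p1_s mem_last.
Qed.

Lemma dist_le_induced (y z : sT) n :
  dist_le T e (val y) (val z) n -> dist_le sT (induced e S) y z n.
Proof.
case=> p [yp pz sz_p]; case: (shortenP yp) pz => q yq uniq_yq sub_qp qz.
have q_in_S : all [in S] q by apply: (uniq_path_in_set yq); rewrite // qz (valP z).
pose r := pmap (@insub _ _ sT) q.
have val_q : map val r = q.
  by rewrite (pmap_filter (@insubK _ _ sT)) (eq_filter (isSome_insub _)); apply/all_filterP.
exists r; split.
- by move: yq; rewrite -val_q path_map.
- by apply: val_inj; rewrite -(last_map val) val_q qz.
- rewrite -(size_map val) val_q; apply: leq_trans sz_p.
  by apply: uniq_leq_size sub_qp; case/andP: uniq_yq.
Qed.

Lemma dist_le_val (y z : sT) n :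
  dist_le sT (induced e S) y z n -> dist_le T e (val y) (val z) n.
Proof.
by case=> p [yp pz sz_p]; exists (map val p); rewrite path_map last_map size_map pz.
Qed.

Lemma twin_representative u :
  exists2 x, x \in S &
    forall v r, ~~ is_leaf e v -> dist_le T e v x r -> dist_le T e v u r.
Proof.
have [uS|uS] := boolP (u \in S); first by exists u.
have u_leaf := contraNT (@nonleaf_in_S u) uS.
have [s Eu] := leaf_neighbour u_leaf; have esu : e s u by rewrite e_sym Eu.
have : exists l, is_leaf e l && e s l by exists u; rewrite u_leaf esu.
move=> /one_twin_in_S/eqP/cards1P[l Sl].
have : l \in [set l in S | is_leaf e l && e s l] by rewrite Sl set11.
rewrite inE => /and3P[lS l_leaf esl].
exists l => // v r v_nl; apply: (dist_le_twin e_sym l_leaf _ esu); first by rewrite e_sym.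
by apply: contraNneq v_nl => ->.
Qed.

Lemma gammaB_induced_le k : 0 < k -> gammaB (induced e S) k <= gammaB e k.
Proof.
move=> k_gt0; have [f f_dom ->] := gammaB_attained e k_gt0.
have F_le_k x : (f x : nat) <= k by rewrite -ltnS ltn_ord.
pose G := gather e k (fun x => f x : nat).
apply: (@leq_trans (\sum_(y : sT) G (val y))).
  apply: gammaB_le_sum => [y|y]; first exact: gather_le.
  have [v [v_nl Gv_gt0 vy]] := dominated_by_gather e_sym e_conn card_T F_le_k (f_dom (val y)).
  by exists (Sub v (nonleaf_in_S v_nl)); split => //; apply: dist_le_induced.
rewrite -(big_sub S G); apply: leq_trans (sum_gather_le e_sym k _).
by rewrite [X in _ <= X](bigID [in S]) /= leq_addr.
Qed.

Lemma gammaB_le_induced k : 0 < k -> gammaB e k <= gammaB (induced e S) k.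
Proof.
move=> k_gt0; have [f f_dom ->] := gammaB_attained (induced e S) k_gt0.
pose F x := oapp (fun y : sT => f y : nat) 0 (insub x).
have F_val (y : sT) : F (val y) = f y by rewrite /F valK.
have F_le_k x : F x <= k by rewrite /F; case: insub => //= y; rewrite -ltnS ltn_ord.
apply: (@leq_trans (\sum_x gather e k F x)).
  apply: gammaB_le_sum => [x|u]; first exact: gather_le.
  have [x xS x_u] := twin_representative u.
  have [w [fw_gt0 wx]] := f_dom (Sub x xS).
  have F_dom_x : dominated_by e F x.
    by exists (val w); rewrite F_val; split => //; apply: dist_le_val wx.
  have [v [v_nl Gv_gt0 vx]] := dominated_by_gather e_sym e_conn card_T F_le_k F_dom_x.
  by exists v; split => //; apply: x_u.
apply: leq_trans (sum_gather_le e_sym k F) _.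
rewrite /bcost (eq_bigr (F \o val)) => [|y _]; last by rewrite /= F_val.
rewrite -(big_sub S F) [X in X <= _](bigID [in S]) /= [X in _ + X]big1 ?addn0 //.
by move=> x /negbTE xS; rewrite /F insubF.
Qed.

End TwinFree.

Theorem proposition2 (T : finType) (e : rel T) (S : {set T}) (k : nat) :
  is_tree e -> 3 <= #|T| -> 1 <= k -> twin_free_set e S ->
  gammaB e k = gammaB (induced e S) k.
Proof.
move=> [[e_sym _] e_conn _] card_T k_gt0 [nonleaf_in_S one_twin_in_S].
apply/eqP; rewrite eqn_leq.
by rewrite (gammaB_le_induced e_sym e_conn card_T nonleaf_in_S one_twin_in_S k_gt0)
           (gammaB_induced_le e_sym e_conn card_T nonleaf_in_S k_gt0).
Qed.
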